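(* Let $H$ be a Hopf algebra over $\mathbb C$ with comultiplication $\Delta$, counit $\epsilon$ and antipode $S$, and let $G$ be a finite subgroup of the group $G(H)$ of group-like elements of $H$ contained in the center of $H$. Let $\omega$ be a normalized $3$-cocycle on $G$ with values in $\mathbb C^\times$ and $j\colon G\to\hat G$ a group isomorphism. Then $H_{(G,\omega,j)}=(H,\Delta,\epsilon,\phi,\alpha,\beta,S)$ with $$\phi=\sum_{x,y,z\in G}\omega(x,y,z)^{-1}e_x\otimes e_y\otimes e_z,\qquad \alpha=1,\qquad\beta=\sum_{x\in G}\omega(x,x^{-1},x)e_x$$ is a quasi-Hopf algebra. Moreover, if $\omega'$ is a normalized $3$-cocycle cohomologous to $\omega$, then $H_{(G,\omega,j)}$ and $H_{(G,\omega',j)}$ are gauge equivalent quasi-Hopf algebras.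
   Context: $\hat G$ is the group of linear characters $G\to\mathbb C^\times$. For $x\in G$, $e_x=\frac{1}{|G|}\sum_{y\in G}j(y)(x)^{-1}y\in\mathbb C[G]\subseteq H$. A quasi-Hopf algebra is $(H,\Delta,\epsilon,\phi,\alpha,\beta,S)$ with $\Delta,\epsilon$ algebra maps, $\phi$ invertible satisfying the pentagon identity and $(\mathrm{id}\otimes\epsilon\otimes\mathrm{id})(\phi)=1\otimes1$, counit axioms, $\phi(\Delta\otimes\mathrm{id})\Delta(h)=(\mathrm{id}\otimes\Delta)\Delta(h)\phi$, $S$ an anti-algebra automorphism, $S(h_{(1)})\alpha h_{(2)}=\epsilon(h)\alpha$, $h_{(1)}\beta S(h_{(2)})=\epsilon(h)\beta$, $\phi^{(1)}\beta S(\phi^{(2)})\alpha\phi^{(3)}=1$, $S(\phi^{(-1)})\alpha\phi^{(-2)}\beta S(\phi^{(-3)})=1$. Gauge equivalence: $A$ and $B$ are gauge equivalent if $A\cong B^F$ as quasi-bialgebras for some gauge transformation $F$ on $B$ (invertible $F\in B\otimes B$ with $(\epsilon\otimes\mathrm{id})(F)=1=(\mathrm{id}\otimes\epsilon)(F)$, $\Delta^F=F\Delta F^{-1}$, $\phi^F=(1\otimes F)(\mathrm{id}\otimes\Delta)(F)\phi(\Delta\otimes\mathrm{id})(F^{-1})(F^{-1}\otimes1)$). A $3$-cocycle is normalized if it equals $1$ whenever an argument is $1$. *)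

From HB Require Import structures.
From mathcomp Require Import all_boot all_order all_algebra all_fingroup.
From mathcomp Require Import complex Rstruct.
Set Implicit Arguments.
Unset Strict Implicit.
Unset Printing Implicit Defensive.
Import GRing.Theory.
Local Open Scope ring_scope.

Notation C := (Rdefinitions.R)[i].

(* An element of H (x) H is represented by a finite list of pure tensors     *)
(* [(a_1,b_1); ...] (meaning sum_i a_i (x) b_i); two representatives are     *)
(* identified (teq2) iff they agree under every pairing with f (x) g for     *)
(* C-linear functionals f, g on H.  Over a field, H* (x) H* separates the    *)
(* points of H (x) H, so teq2 is exactly equality in H (x) H.  Same for the  *)
(* third and fourth tensor powers.                                           *)
Section Tensors.
Variable H : algType C.

Definition lin_fun (f : H -> C) :=
  forall (a : C) (u v : H), f (a *: u + v) = a * f u + f v.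

Definition T2 := seq (H * H).
Definition T3 := seq (H * H * H).
Definition T4 := seq (H * H * H * H).

Definition ev2 (f g : H -> C) (s : T2) : C := \sum_(p <- s) f p.1 * g p.2.
Definition ev3 (f g k : H -> C) (s : T3) : C :=
  \sum_(p <- s) f p.1.1 * g p.1.2 * k p.2.
Definition ev4 (f g k l : H -> C) (s : T4) : C :=
  \sum_(p <- s) f p.1.1.1 * g p.1.1.2 * k p.1.2 * l p.2.

Definition teq2 (s t : T2) := forall f g, lin_fun f -> lin_fun g ->
  ev2 f g s = ev2 f g t.
Definition teq3 (s t : T3) := forall f g k, lin_fun f -> lin_fun g -> lin_fun k ->
  ev3 f g k s = ev3 f g k t.
Definition teq4 (s t : T4) := forall f g k l,
  lin_fun f -> lin_fun g -> lin_fun k -> lin_fun l ->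
  ev4 f g k l s = ev4 f g k l t.

Definition one2 : T2 := [:: (1, 1)].
Definition one3 : T3 := [:: (1, 1, 1)].
Definition one4 : T4 := [:: (1, 1, 1, 1)].
Definition mul2 (s t : T2) : T2 := [seq (p.1 * q.1, p.2 * q.2) | p <- s, q <- t].
Definition mul3 (s t : T3) : T3 :=
  [seq (p.1.1 * q.1.1, p.1.2 * q.1.2, p.2 * q.2) | p <- s, q <- t].
Definition mul4 (s t : T4) : T4 :=
  [seq (p.1.1.1 * q.1.1.1, p.1.1.2 * q.1.1.2, p.1.2 * q.1.2, p.2 * q.2)
  | p <- s, q <- t].
Definition scale2 (a : C) (s : T2) : T2 := [seq (a *: p.1, p.2) | p <- s].

Variable D : H -> T2.
Variable eps : H -> C.

Definition D_id (s : T2) : T3 := [seq (q.1, q.2, p.2) | p <- s, q <- D p.1].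
Definition id_D (s : T2) : T3 := [seq (p.1, q.1, q.2) | p <- s, q <- D p.2].
Definition D_id_id (s : T3) : T4 :=
  [seq (q.1, q.2, p.1.2, p.2) | p <- s, q <- D p.1.1].
Definition id_D_id (s : T3) : T4 :=
  [seq (p.1.1, q.1, q.2, p.2) | p <- s, q <- D p.1.2].
Definition id_id_D (s : T3) : T4 :=
  [seq (p.1.1, p.1.2, q.1, q.2) | p <- s, q <- D p.2].
Definition t2_one (s : T2) : T3 := [seq (p.1, p.2, 1) | p <- s].
Definition one_t2 (s : T2) : T3 := [seq (1, p.1, p.2) | p <- s].
Definition t3_one (s : T3) : T4 := [seq (p.1.1, p.1.2, p.2, 1) | p <- s].
Definition one_t3 (s : T3) : T4 := [seq (1, p.1.1, p.1.2, p.2) | p <- s].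
Definition eps_id (s : T2) : H := \sum_(p <- s) eps p.1 *: p.2.
Definition id_eps (s : T2) : H := \sum_(p <- s) eps p.2 *: p.1.
Definition id_eps_id (s : T3) : T2 := [seq (eps p.1.2 *: p.1.1, p.2) | p <- s].

Definition algebra_maps :=
  [/\ (forall a u v, teq2 (D (a *: u + v)) (scale2 a (D u) ++ D v)),
      (forall u v, teq2 (D (u * v)) (mul2 (D u) (D v))) &
      teq2 (D 1) one2] /\
  [/\ (forall a u v, eps (a *: u + v) = a * eps u + eps v),
      (forall u v, eps (u * v) = eps u * eps v) & eps 1 = 1].

Definition counit_axioms := forall h, eps_id (D h) = h /\ id_eps (D h) = h.

Definition inverse3 (phi psi : T3) := teq3 (mul3 phi psi) one3 /\ teq3 (mul3 psi phi) one3.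
Definition inverse2 (F G : T2) := teq2 (mul2 F G) one2 /\ teq2 (mul2 G F) one2.

Definition quasi_bialgebra (phi : T3) :=
  algebra_maps /\
  [/\ (exists psi, inverse3 phi psi),
      teq4 (mul4 (mul4 (one_t3 phi) (id_D_id phi)) (t3_one phi))
           (mul4 (id_id_D phi) (D_id_id phi)),
      teq2 (id_eps_id phi) one2,
      counit_axioms &
      forall h, teq3 (mul3 phi (D_id (D h))) (mul3 (id_D (D h)) phi)].

Definition anti_alg_automorphism (S : H -> H) :=
  [/\ (forall (a : C) u v, S (a *: u + v) = a *: S u + S v),
      (forall u v, S (u * v) = S v * S u), S 1 = 1 & bijective S].

Definition quasi_hopf (phi : T3) (alpha beta : H) (S : H -> H) :=
  [/\ quasi_bialgebra phi, anti_alg_automorphism S &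
      (forall h, \sum_(p <- D h) S p.1 * alpha * p.2 = eps h *: alpha)] /\
  [/\       (forall h, \sum_(p <- D h) p.1 * beta * S p.2 = eps h *: beta),
      \sum_(p <- phi) p.1.1 * beta * S p.1.2 * alpha * p.2 = 1 &
      forall psi, inverse3 phi psi ->
        \sum_(p <- psi) S p.1.1 * alpha * p.1.2 * beta * S p.2 = 1].

Definition hopf_algebra (S : H -> H) :=
  [/\ algebra_maps,
      (forall h, teq3 (D_id (D h)) (id_D (D h))) &
      counit_axioms] /\
  [/\ (forall (a : C) u v, S (a *: u + v) = a *: S u + S v),
      (forall h, \sum_(p <- D h) S p.1 * p.2 = (eps h)%:A),
      (forall h, \sum_(p <- D h) p.1 * S p.2 = (eps h)%:A) &
      bijective S].

Definition gauge_transformation (F Finv : T2) :=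
  [/\ inverse2 F Finv, eps_id F = 1 & id_eps F = 1].
Definition twist_D (F Finv : T2) (h : H) : T2 := mul2 (mul2 F (D h)) Finv.
Definition twist_phi (F Finv : T2) (phi : T3) : T3 :=
  mul3 (mul3 (mul3 (mul3 (one_t2 F) (id_D F)) phi) (D_id Finv)) (t2_one Finv).

Definition group_like (g : H) := g != 0 /\ teq2 (D g) [:: (g, g)].
End Tensors.

Arguments teq2 {H}. Arguments teq3 {H}.

Definition map2 (A B : algType C) (f : A -> B) (s : T2 A) : T2 B :=
  [seq (f p.1, f p.2) | p <- s].
Definition map3 (A B : algType C) (f : A -> B) (s : T3 A) : T3 B :=
  [seq (f p.1.1, f p.1.2, f p.2) | p <- s].

Definition qbialg_iso (A B : algType C)
  (DA : A -> T2 A) (epsA : A -> C) (phiA : T3 A)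
  (DB : B -> T2 B) (epsB : B -> C) (phiB : T3 B) (f : A -> B) :=
  [/\ (forall (a : C) u v, f (a *: u + v) = a *: f u + f v),
      (forall u v, f (u * v) = f u * f v), f 1 = 1 & bijective f] /\
  [/\ (forall h, teq2 (map2 f (DA h)) (DB (f h))),
      (forall h, epsB (f h) = epsA h) &
      teq3 (map3 f phiA) phiB].

Definition gauge_equivalent (A B : algType C)
  (DA : A -> T2 A) (epsA : A -> C) (phiA : T3 A)
  (DB : B -> T2 B) (epsB : B -> C) (phiB : T3 B) :=
  exists (F Finv : T2 B) (f : A -> B),
    gauge_transformation epsB F Finv /\
    qbialg_iso DA epsA phiA (twist_D DB F Finv) epsB (twist_phi DB F Finv phiB) f.

Section Groups.
Variable gT : finGroupType.

Definition central_grouplike_subgroup (H : algType C) (D : H -> T2 H)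
  (iota : gT -> H) :=
  [/\ injective iota, iota 1%g = 1,
      (forall x y, iota (x * y)%g = iota x * iota y),
      (forall x, group_like D (iota x)) &
      forall x h, iota x * h = h * iota x].

Definition normalized_3cocycle (w : gT -> gT -> gT -> C) :=
  [/\ (forall x y z, w x y z != 0),
      (forall x y z t,
        w y z t * w x (y * z)%g t * w x y z = w (x * y)%g z t * w x y (z * t)%g) &
      forall x y, [/\ w 1%g x y = 1, w x 1%g y = 1 & w x y 1%g = 1]].

Definition cohomologous (w w' : gT -> gT -> gT -> C) :=
  exists rho : gT -> gT -> C, (forall x y, rho x y != 0) /\
    forall x y z, w' x y z =
      w x y z * (rho y z * rho x (y * z)%g) / (rho (x * y)%g z * rho x y).

Definition lin_char (chi : gT -> C) :=
  (forall x, chi x != 0) /\ forall x y, chi (x * y)%g = chi x * chi y.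

Definition char_iso (j : gT -> gT -> C) :=
  [/\ (forall x, lin_char (j x)),
      (forall x y z, j (x * y)%g z = j x z * j y z),
      injective j &
      forall chi, lin_char chi -> exists x, j x = chi].

Variable H : algType C.
Variable iota : gT -> H.
Variable j : gT -> gT -> C.

Definition idem (x : gT) : H :=
  (#|gT|%:R)^-1 *: \sum_(y : gT) ((j y x)^-1 *: iota y).

Definition qphi (w : gT -> gT -> gT -> C) : T3 H :=
  flatten [seq [seq ((w x y z)^-1 *: idem x, idem y, idem z)
               | y <- enum gT, z <- enum gT] | x <- enum gT].

Definition qbeta (w : gT -> gT -> gT -> C) : H :=
  \sum_(x : gT) w x x^-1%g x *: idem x.
End Groups.

(* As G is central and j identifies G with its character group, the elements
   e_x are orthogonal central idempotents with sum 1, and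
   Delta(e_x) = sum_(ab = x) e_a (x) e_b, eps(e_x) = [x == 1], S(e_x) = e_(x^-1).
   Every tensor assembled from phi with Delta, eps, units and products thus has
   coordinates on the basis e_x (x) e_y (x) ... given by a function on G^n, and
   the quasi-bialgebra axioms become identities between such functions: the
   pentagon is the cocycle identity, the counit axiom is normalization, and as
   phi is central, quasi-coassociativity is coassociativity.  If w' = w d(rho)
   with rho normalized, F = sum rho(x,y) e_x (x) e_y is a central gauge
   transformation; it leaves Delta unchanged and twists phi into phi'.
   Tensors are only compared through their pairings with linear forms; an
   equality is pushed through a multilinear map such as (a, b) |-> S(a) b by
   expanding along a finite-rank projection built from linear forms, which
   exist by Zorn's lemma.  This is also how the antipode is shown to be
   antimultiplicative. *)

From HB Require Import structures.
From mathcomp Require Import all_boot all_order all_algebra all_fingroup.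
From mathcomp Require Import complex Rstruct ring.
From mathcomp Require boolp classical_sets.
Set Implicit Arguments.
Unset Strict Implicit.
Unset Printing Implicit Defensive.
Import GRing.Theory Num.Theory.
Local Open Scope ring_scope.

Section LinearMaps.
Variables (U : lmodType C) (V : zmodType) (s : GRing.Scale.law C V) (f : U -> V).
Hypothesis lin_f : linear_for s f.

Lemma lin0 : f 0 = 0.
Proof. by rewrite -[X in f X](subrr 0) (zmod_morphism_linear lin_f) subrr. Qed.

Lemma linZ a u : f (a *: u) = s a (f u).
Proof. exact: scalable_linear. Qed.

Lemma linD u v : f (u + v) = f u + f v.
Proof. by have [_ ->] := GRing.semilinear_linear lin_f. Qed.

Lemma lin_sum I (r : seq I) (F : I -> U) :
  f (\sum_(i <- r) F i) = \sum_(i <- r) f (F i).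
Proof. by elim/big_rec2: _ => [|i x y _ <-]; rewrite ?lin0 ?linD. Qed.
End LinearMaps.

Section SeparatingForms.
Import classical_sets.
Local Open Scope classical_set_scope.
Variable V : lmodType C.

Definition lin_closed (X : set V) := forall (a : C) u v, X u -> X v -> X (a *: u + v).

Lemma lin_closed_scale (X : set V) u c : X 0 -> lin_closed X -> X u -> X (c *: u).
Proof. by move=> X0 cX Xu; rewrite -[c *: u]addr0; apply: cX. Qed.

Definition avoiding (P : set V) y (A : set V) := lin_closed (A `|` P) /\ ~ (A `|` P) y.

Lemma exists_maximal_avoiding (P : set V) y : lin_closed P -> ~ P y ->
  exists A, avoiding P y A /\ forall B, A `<` B -> ~ avoiding P y B.
Proof.
move=> cP Py; apply: Zorn_bigcup => F okF totF.
pose F' := F `|` [set set0].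
have okF' X : F' X -> avoiding P y X by case=> [/okF //|->]; rewrite /avoiding set0U.
have totF' X Y : F' X -> F' Y -> X `<=` Y \/ Y `<=` X.
  case=> [FX|->]; last by left; apply: sub0set.
  case=> [FY|->]; last by right; apply: sub0set.
  exact: totF.
have subF' X : F' X -> X `<=` \bigcup_(X in F) X by case=> [FX u Xu|-> //]; exists X.
have memF' u : (\bigcup_(X in F) X `|` P) u -> exists2 X, F' X & (X `|` P) u.
  case=> [[X FX Xu]|Pu]; first by exists X; [left|left].
  by exists set0; [right|right].
split=> [a u v /memF' [X FX Xu] /memF' [Y FY Yv]|/memF' [X /okF' [_ Xy] //]].
have [Z [FZ XZ YZ]] : exists Z, [/\ F' Z, X `|` P `<=` Z `|` P & Y `|` P `<=` Z `|` P].
  by have [XY|YX] := totF' _ _ FX FY; [exists Y|exists X]; split=> //; apply: setSU.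
have [Zw|Pw] := (okF' _ FZ).1 a u v (XZ _ Xu) (YZ _ Yv); last by right.
by left; apply: subF' Zw.
Qed.

Lemma maximal_subspace_avoiding (P : set V) y : P 0 -> lin_closed P -> ~ P y ->
  exists Q : set V, [/\ lin_closed Q, P `<=` Q, ~ Q y &
    forall z, ~ Q z -> exists c q, Q q /\ y = q + c *: z].
Proof.
move=> P0 cP Py; have [A [[cA Ay] maxA]] := exists_maximal_avoiding cP Py.
pose Q := A `|` P; exists Q; split=> // [u Pu|z Qz]; first by right.
pose B v := exists c q, Q q /\ v = q + c *: z.
have QB u : Q u -> B u by exists 0, u; rewrite scale0r addr0.
have cB : lin_closed B.
  move=> a _ _ [c1 [q1 [Q1 ->]]] [c2 [q2 [Q2 ->]]].
  exists (a * c1 + c2), (a *: q1 + q2); split; first exact: cA.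
  by rewrite scalerDr scalerDl scalerA addrACA.
have : ~ avoiding P y B.
  apply: maxA; split=> [u Au|AB]; first by apply: QB; left.
  by apply: Qz; left; apply: AB; exists 1, 0; rewrite add0r scale1r; split=> //; right.
rewrite /avoiding; have -> : B `|` P = B by apply/setUidl => u Pu; apply: QB; right.
by move=> nB; apply: boolp.contrapT => By; apply: nB.
Qed.

Lemma exists_separating_form (P : set V) y : P 0 -> lin_closed P -> ~ P y ->
  exists g : {scalar V}, (forall u, P u -> g u = 0) /\ g y = 1.
Proof.
move=> P0 cP Py; have [Q [cQ PQ Qy maxQ]] := maximal_subspace_avoiding P0 cP Py.
have Q0 : Q 0 := PQ _ P0.
have decomp z : exists c q, Q q /\ z = q + c *: y.
  have [Qz|Qz] := boolp.EM (Q z); first by exists 0, z; rewrite scale0r addr0.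
  have [c [q [Qq Ey]]] := maxQ z Qz.
  have [c0|c0] := eqVneq c 0; first by case: Qy; rewrite Ey c0 scale0r addr0.
  exists c^-1, (- c^-1 *: q); split; first exact: lin_closed_scale.
  by rewrite Ey scalerDr scalerA mulVf // scale1r scaleNr addKr.
have coef_uniq c1 c2 q1 q2 : Q q1 -> Q q2 -> q1 + c1 *: y = q2 + c2 *: y -> c1 = c2.
  move=> Q1 Q2 E; apply: boolp.contrapT => /eqP c12; apply: Qy.
  have -> : y = (c1 - c2)^-1 *: (q2 - q1).
    apply: (@scalerI _ _ (c1 - c2)); first by rewrite subr_eq0.
    rewrite scalerA mulfV ?subr_eq0 // scale1r scalerBl.
    by rewrite -[c1 *: y](addKr q1) E addrA addrK addrC.
  by apply: lin_closed_scale => //; rewrite addrC -scaleN1r; apply: cQ.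
pose g z := proj1_sig (boolp.cid (decomp z)).
have gP z : exists q, Q q /\ z = q + g z *: y := proj2_sig (boolp.cid (decomp z)).
have gE z c q : Q q -> z = q + c *: y -> g z = c.
  move=> Qq Ez; have [q' [Qq' Ez']] := gP z.
  by apply: coef_uniq Qq' Qq _; rewrite -Ez' -Ez.
have lin_g : scalar g.
  move=> a u v; have [qu [Qu Eu]] := gP u; have [qv [Qv Ev]] := gP v.
  apply: (gE _ _ (a *: qu + qv)); first exact: cQ.
  by rewrite {1}Eu {1}Ev scalerDr scalerDl scalerA addrACA.
exists (HB.pack_for {scalar V} g (GRing.isLinear.Build _ _ _ _ g lin_g)).
split=> [u /PQ Qu|]; first by apply: (gE _ _ u); rewrite ?scale0r ?addr0.
by apply: (gE _ _ 0); rewrite ?add0r ?scale1r.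
Qed.
End SeparatingForms.

Section FiniteProjections.
Variable V : lmodType C.

Definition fproj (r : seq ({scalar V} * V)) v := \sum_(l <- r) l.1 v *: l.2.

Lemma fproj_is_linear r : linear (fproj r).
Proof.
move=> a u v; rewrite /fproj scaler_sumr -big_split; apply: eq_bigr => l _ /=.
by rewrite linearP scalerDl scalerA.
Qed.

Lemma exists_fproj (vs : seq V) :
  exists r, idempotent_fun (fproj r) /\ {in vs, forall v, fproj r v = v}.
Proof.
elim: vs => [|x vs [r [idem_r fix_r]]].
  by exists [::]; split=> // v; rewrite /fproj /= !big_nil.
have lin_r := fproj_is_linear r.
have idem_r' v : fproj r (fproj r v) = fproj r v := idem_r v.
have [fix_x|nfix_x] := eqVneq (fproj r x) x.
  by exists r; split=> // v; rewrite inE => /predU1P [->|/fix_r].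
pose y := x - fproj r x.
have ry : fproj r y = 0 by rewrite (zmod_morphism_linear lin_r) idem_r' subrr.
have [||Py|g [g0 gy]] := exists_separating_form (P := fun v => fproj r v = v) (y := y).
- exact: lin0 lin_r.
- by move=> a u v Pu Pv; rewrite lin_r Pu Pv.
- by move: nfix_x; rewrite eq_sym -subr_eq0 -/y -Py ry eqxx.
have proj_cons v : fproj ((g, y) :: r) v = g v *: y + fproj r v by rewrite /fproj big_cons.
have g_range v : g (fproj r v) = 0 by apply: g0; apply: idem_r'.
exists ((g, y) :: r); split=> [v|v].
  by rewrite /= !proj_cons linearP gy mulr1 g_range addr0 lin_r ry scaler0 add0r idem_r'.
rewrite inE => /predU1P [->|/fix_r fix_v]; last first.
  by rewrite proj_cons -{1}fix_v g_range scale0r add0r.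
have gx : g x = 1 by rewrite -{1}[x](subrK (fproj r x)) -/y linearD gy g_range addr0.
by rewrite proj_cons gx scale1r /y subrK.
Qed.

Lemma fproj_expand (W : lmodType C) r (f : V -> W) v :
  linear f -> fproj r v = v -> f v = \sum_(l <- r) l.1 v *: f l.2.
Proof.
move=> lin_f fix_v; rewrite -{1}fix_v (lin_sum lin_f).
by apply: eq_bigr => l _; rewrite (linZ lin_f).
Qed.
End FiniteProjections.

Section TensorSeparation.
Variables (H : algType C) (W : lmodType C).

Definition trilinear (T : H -> H -> H -> W) :=
  [/\ forall b c, linear (fun a => T a b c), forall a c, linear (fun b => T a b c)
    & forall a b, linear (T a b)].

(* Both sums expand along a finite-rank projection fixing every component of s
   and t, which leaves only pairings [ev2 l m] with linear forms. *)
Lemma teq2_sum (s t : T2 H) (B : H -> H -> W) :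
  teq2 s t -> bilinear_for *:%R *:%R B ->
  \sum_(p <- s) B p.1 p.2 = \sum_(p <- t) B p.1 p.2.
Proof.
move=> st [linB1 linB2].
have [r [_ fix_r]] := exists_fproj [seq x | p <- s ++ t, x <- [:: p.1; p.2]].
have expand u : {subset u <= s ++ t} -> \sum_(p <- u) B p.1 p.2 =
    \sum_(l <- r) \sum_(m <- r) ev2 l.1 m.1 u *: B l.2 m.2.
  move=> sub_u; under [RHS]eq_bigr do under eq_bigr do rewrite scaler_suml.
  under [RHS]eq_bigr do rewrite exchange_big.
  rewrite [RHS]exchange_big !big_seq; apply: eq_bigr => p /sub_u p_st.
  have [fix1 fix2] : fproj r p.1 = p.1 /\ fproj r p.2 = p.2.
    by split; apply: fix_r; apply/allpairsPdep; [exists p, p.1|exists p, p.2];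
      rewrite !inE eqxx ?orbT.
  rewrite (fproj_expand (linB1 _) fix1); apply: eq_bigr => l _.
  rewrite (fproj_expand (linB2 _) fix2).
  by rewrite scaler_sumr; apply: eq_bigr => m _; rewrite scalerA.
have sub_s : {subset s <= s ++ t} by move=> p; rewrite mem_cat => ->.
have sub_t : {subset t <= s ++ t} by move=> p; rewrite mem_cat orbC => ->.
rewrite (expand _ sub_s) (expand _ sub_t).
by apply: eq_bigr => l _; apply: eq_bigr => m _; rewrite st //; apply: linearP.
Qed.

Lemma teq3_sum (s t : T3 H) (T : H -> H -> H -> W) : teq3 s t -> trilinear T ->
  \sum_(p <- s) T p.1.1 p.1.2 p.2 = \sum_(p <- t) T p.1.1 p.1.2 p.2.
Proof.
move=> st [linT1 linT2 linT3].
have [r [_ fix_r]] := exists_fproj [seq x | p <- s ++ t, x <- [:: p.1.1; p.1.2; p.2]].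
have expand u : {subset u <= s ++ t} -> \sum_(p <- u) T p.1.1 p.1.2 p.2 =
    \sum_(l <- r) \sum_(m <- r) \sum_(n <- r) ev3 l.1 m.1 n.1 u *: T l.2 m.2 n.2.
  move=> sub_u.
  under [RHS]eq_bigr do under eq_bigr do under eq_bigr do rewrite scaler_suml.
  under [RHS]eq_bigr do under eq_bigr do rewrite exchange_big.
  under [RHS]eq_bigr do rewrite exchange_big.
  rewrite [RHS]exchange_big !big_seq; apply: eq_bigr => p /sub_u p_st.
  have [fix1 fix2 fix3] :
      [/\ fproj r p.1.1 = p.1.1, fproj r p.1.2 = p.1.2 & fproj r p.2 = p.2].
    by split; apply: fix_r; apply/allpairsPdep;
      [exists p, p.1.1|exists p, p.1.2|exists p, p.2]; rewrite !inE eqxx ?orbT.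
  rewrite (fproj_expand (linT1 _ _) fix1); apply: eq_bigr => l _.
  rewrite (fproj_expand (linT2 _ _) fix2) scaler_sumr; apply: eq_bigr => m _.
  rewrite (fproj_expand (linT3 _ _) fix3) !scaler_sumr; apply: eq_bigr => n _.
  by rewrite !scalerA.
have sub_s : {subset s <= s ++ t} by move=> p; rewrite mem_cat => ->.
have sub_t : {subset t <= s ++ t} by move=> p; rewrite mem_cat orbC => ->.
rewrite (expand _ sub_s) (expand _ sub_t).
apply: eq_bigr => l _; apply: eq_bigr => m _; apply: eq_bigr => n _.
by rewrite st //; apply: linearP.
Qed.
End TensorSeparation.

Section CharacterOrthogonality.
Variables (gT : finGroupType) (j : gT -> gT -> C).
Hypothesis hj : char_iso j.
Local Notation n := (#|gT|%:R : C).

Lemma order_neq0 : n != 0.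
Proof. by rewrite pnatr_eq0 -lt0n; apply/card_gt0P; exists 1%g. Qed.

Lemma lin_char1 (chi : gT -> C) : lin_char chi -> chi 1%g = 1.
Proof.
move=> [chi_neq0 chiM]; apply: (mulfI (chi_neq0 1%g)).
by rewrite -chiM mulg1 mulr1.
Qed.

Lemma char_neq0 y x : j y x != 0.
Proof. by case: hj => /(_ y) []. Qed.

Lemma charM y x z : j y (x * z)%g = j y x * j y z.
Proof. by case: hj => /(_ y) []. Qed.

Lemma char1 y : j y 1%g = 1.
Proof. by case: hj => /(_ y) /lin_char1. Qed.

Lemma charV y x : j y x^-1%g = (j y x)^-1.
Proof. by apply: (mulfI (char_neq0 y x)); rewrite -charM mulgV char1 mulfV ?char_neq0. Qed.

Lemma char_isoM y y' x : j (y * y')%g x = j y x * j y' x.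
Proof. by case: hj. Qed.

Lemma char_iso1 x : j 1%g x = 1.
Proof.
apply: (mulfI (char_neq0 1%g x)).
by rewrite -char_isoM mulg1 mulr1.
Qed.

Lemma char_isoV y x : j y^-1%g x = (j y x)^-1.
Proof.
apply: (mulfI (char_neq0 y x)).
by rewrite -char_isoM mulgV char_iso1 mulfV ?char_neq0.
Qed.

(* A nontrivial character [j y] takes some value [j y x0 != 1], and summing is
   invariant under translation by [x0]. *)
Lemma sum_char y : \sum_x j y x = if y == 1%g then n else 0.
Proof.
have [->|y_neq1] := eqVneq; first by under eq_bigr do rewrite char_iso1; rewrite sumr_const.
have [x0 jyx0] : exists x0, j y x0 != 1.
  apply: boolp.contrapT => all1; case: hj => _ _ j_inj _; move/eqP: y_neq1; apply.
  apply: j_inj; apply: boolp.funext => x; rewrite char_iso1.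
  by apply/eqP; apply: boolp.contrapT => /negP jyx; apply: all1; exists x.
have shift : \sum_x j y x = j y x0 * \sum_x j y x.
  rewrite {1}(reindex_inj (mulgI x0)) mulr_sumr.
  by apply: eq_bigr => x _; rewrite charM.
apply/eqP; have : (1 - j y x0) * \sum_x j y x == 0 by rewrite mulrBl mul1r -shift subrr.
by rewrite mulf_eq0 subr_eq0 eq_sym (negbTE jyx0).
Qed.

Lemma char_row_orth y y' : \sum_x j y x * (j y' x)^-1 = if y == y' then n else 0.
Proof.
under eq_bigr do rewrite -char_isoV -char_isoM.
by rewrite sum_char -eq_mulgV1.
Qed.

(* Row orthogonality says that the square character table has a right
   inverse; the left inverse property gives column orthogonality. *)
Lemma char_col_orth x x' : \sum_y (j y x)^-1 * j y x' = if x == x' then n else 0.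
Proof.
pose A := \matrix_(i, k < #|gT|) j (enum_val i) (enum_val k).
pose B := \matrix_(k, i < #|gT|) (n^-1 * (j (enum_val i) (enum_val k))^-1).
have delta (b : bool) : n^-1 * (if b then n else 0) = b%:R.
  by case: b; rewrite ?mulr0 // mulVf ?order_neq0.
have AB : A *m B = 1%:M.
  apply/matrixP => i i'; rewrite !mxE -(inj_eq enum_val_inj) -delta -char_row_orth.
  rewrite mulr_sumr (reindex _ (onW_bij _ (enum_val_bij gT))) /=.
  by apply: eq_bigr => k _; rewrite !mxE mulrCA.
move/matrixP/(_ (enum_rank x) (enum_rank x')): (mulmx1C AB).
rewrite !mxE (inj_eq enum_rank_inj) -delta => BA.
apply: (mulfI (invr_neq0 order_neq0)); rewrite -BA mulr_sumr.
rewrite (reindex _ (onW_bij _ (enum_val_bij gT))) /=.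
by apply: eq_bigr => k _; rewrite !mxE !enum_rankK mulrA.
Qed.
End CharacterOrthogonality.

Ltac linear_norm lin := rewrite ?(mulrDl, mulrDr); do 2 (rewrite -?scalerAr -?scalerAl);
  rewrite ?lin ?(mulrDl, mulrDr); do 3 (rewrite -?scalerAr -?scalerAl).

Section Antipode.
Variables (H : algType C) (D : H -> T2 H) (eps : H -> C) (S : H -> H).
Hypothesis D_linear : forall a u v, teq2 (D (a *: u + v)) (scale2 a (D u) ++ D v).
Hypothesis D_mul : forall u v, teq2 (D (u * v)) (mul2 (D u) (D v)).
Hypothesis D_1 : teq2 (D 1) (one2 H).
Hypothesis eps_mul : forall u v, eps (u * v) = eps u * eps v.
Hypothesis eps_1 : eps 1 = 1.
Hypothesis coassoc : forall h, teq3 (D_id D (D h)) (id_D D (D h)).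
Hypothesis counit : forall h, eps_id eps (D h) = h /\ id_eps eps (D h) = h.
Hypothesis S_linear : linear S.
Hypothesis antipodeL : forall h, \sum_(p <- D h) S p.1 * p.2 = (eps h)%:A.
Hypothesis antipodeR : forall h, \sum_(p <- D h) p.1 * S p.2 = (eps h)%:A.

Lemma ev2_D_scalar f g : lin_fun f -> lin_fun g -> scalar (fun u => ev2 f g (D u)).
Proof.
move=> lin_f lin_g a u v /=; rewrite (D_linear a u v lin_f lin_g) /ev2 big_cat big_map.
by rewrite mulr_sumr; congr (_ + _); apply: eq_bigr => p _; rewrite (linZ lin_f) mulrA.
Qed.

Lemma antipode_mul_bilinear : bilinear_for *:%R *:%R (fun a b : H => S a * b).
Proof.
split=> [b|a] x u v /=; first by rewrite S_linear mulrDl scalerAl.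
by rewrite mulrDr scalerAr.
Qed.

Lemma antipode1 : S 1 = 1.
Proof.
have := teq2_sum D_1 antipode_mul_bilinear.
by rewrite antipodeL eps_1 big_seq1 mulr1 scale1r.
Qed.

Lemma antipode_convolution_mul a b :
  \sum_(r <- D a) \sum_(t <- D b) S (r.1 * t.1) * (r.2 * t.2) = (eps a * eps b)%:A.
Proof.
rewrite -eps_mul -antipodeL (teq2_sum (D_mul a b) antipode_mul_bilinear).
by rewrite /mul2 big_allpairs_dep.
Qed.

Lemma scale_eps_antipode a b X : (eps a * eps b) *: X =
  \sum_(r <- D a) \sum_(t <- D b) X * r.1 * t.1 * S t.2 * S r.2.
Proof.
symmetry; transitivity (\sum_(r <- D a) X * r.1 * (\sum_(t <- D b) t.1 * S t.2) * S r.2).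
  apply: eq_bigr => r _; rewrite mulr_sumr mulr_suml.
  by apply: eq_bigr => t _; rewrite !mulrA.
transitivity (eps b *: (X * \sum_(r <- D a) r.1 * S r.2)).
  rewrite mulr_sumr scaler_sumr; apply: eq_bigr => r _.
  by rewrite antipodeR mulr_algr -scalerAl mulrA.
by rewrite antipodeR mulr_algr scalerA mulrC.
Qed.

Lemma antipode_mul_expand u v : S (u * v) =
  \sum_(P <- id_D D (D u)) \sum_(Q <- id_D D (D v))
    S (P.1.1 * Q.1.1) * P.1.2 * Q.1.2 * S Q.2 * S P.2.
Proof.
have -> : u * v = \sum_(p <- D u) \sum_(q <- D v) (eps p.2 * eps q.2) *: (p.1 * q.1).
  rewrite -{1}[u](proj2 (counit u)) -{1}[v](proj2 (counit v)) /id_eps mulr_suml.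
  apply: eq_bigr => p _; rewrite mulr_sumr; apply: eq_bigr => q _.
  by rewrite -scalerAl -scalerAr scalerA.
rewrite (lin_sum S_linear); under eq_bigr do rewrite (lin_sum S_linear).
under eq_bigr do under eq_bigr do rewrite (linZ S_linear) /= scale_eps_antipode.
rewrite /id_D big_allpairs_dep; apply: eq_bigr => p _.
by rewrite exchange_big; apply: eq_bigr => r _; rewrite big_allpairs_dep.
Qed.

Lemma antipode_mul_contract u v :
  \sum_(P <- D_id D (D u)) \sum_(Q <- D_id D (D v))
    S (P.1.1 * Q.1.1) * P.1.2 * Q.1.2 * S Q.2 * S P.2 = S v * S u.
Proof.
rewrite /D_id big_allpairs_dep.
transitivity (\sum_(p <- D u) \sum_(q <- D v) (eps p.1 * eps q.1)%:A * (S q.2 * S p.2)).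
  apply: eq_bigr => p _; under eq_bigr do rewrite big_allpairs_dep.
  rewrite exchange_big; apply: eq_bigr => q _.
  rewrite -antipode_convolution_mul mulr_suml; apply: eq_bigr => r _.
  by rewrite mulr_suml; apply: eq_bigr => t _; rewrite /= !mulrA.
rewrite -{2}[v](proj1 (counit v)) -{2}[u](proj1 (counit u)) /eps_id.
rewrite !(lin_sum S_linear) mulr_sumr; apply: eq_bigr => p _; rewrite mulr_suml.
apply: eq_bigr => q _; rewrite !(linZ S_linear) mulr_algl -scalerAr -scalerAl.
by rewrite scalerA.
Qed.

Lemma antipode_mul u v : S (u * v) = S v * S u.
Proof.
pose F (P Q : H * H * H) := S (P.1.1 * Q.1.1) * P.1.2 * Q.1.2 * S Q.2 * S P.2.
have linF1 l : trilinear (fun a b c => \sum_(Q <- l) F (a, b, c) Q).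
  split=> [b c|a c|a b] x y z; rewrite scaler_sumr -big_split;
    by apply: eq_bigr => Q _; rewrite /F /=; linear_norm S_linear.
have linF2 P : trilinear (fun a b c => F P (a, b, c)).
  by split=> [b c|a c|a b] x y z; rewrite /F /=; linear_norm S_linear.
rewrite antipode_mul_expand -(teq3_sum (coassoc u) (linF1 _)).
under eq_bigr do rewrite -(teq3_sum (coassoc v) (linF2 _)).
exact: antipode_mul_contract.
Qed.
End Antipode.

Lemma sum_pred1 (T : finType) (V : nmodType) (F : T -> V) a :
  \sum_x (if x == a then F x else 0) = F a.
Proof. by rewrite -big_mkcond big_pred1_eq. Qed.

Section CentralIdempotents.
Variables (H : algType C) (D : H -> T2 H) (eps : H -> C) (S : H -> H).
Hypothesis D_linear : forall a u v, teq2 (D (a *: u + v)) (scale2 a (D u) ++ D v).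
Hypothesis eps_scalar : scalar eps.
Hypothesis eps_mul : forall u v, eps (u * v) = eps u * eps v.
Hypothesis eps_1 : eps 1 = 1.
Hypothesis counit : forall h, eps_id eps (D h) = h /\ id_eps eps (D h) = h.
Hypothesis S_linear : linear S.
Hypothesis antipodeL : forall h, \sum_(p <- D h) S p.1 * p.2 = (eps h)%:A.

Variables (gT : finGroupType) (iota : gT -> H) (j : gT -> gT -> C).
Hypothesis hG : central_grouplike_subgroup D iota.
Hypothesis hj : char_iso j.

Local Notation e := (idem iota j).
Local Notation n := (#|gT|%:R : C).

Lemma iota1 : iota 1%g = 1. Proof. by case: hG. Qed.
Lemma iotaM x y : iota (x * y)%g = iota x * iota y. Proof. by case: hG. Qed.
Lemma D_iota x : teq2 (D (iota x)) [:: (iota x, iota x)].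
Proof. by case: hG => _ _ _ /(_ x) []. Qed.
Lemma iota_central x h : iota x * h = h * iota x. Proof. by case: hG. Qed.

Lemma eps_iota x : eps (iota x) = 1.
Proof.
have eps_sq : eps (iota x) * eps (iota x) = eps (iota x).
  rewrite -[in RHS](proj1 (counit (iota x))) /eps_id (lin_sum eps_scalar).
  under eq_bigr do rewrite (linZ eps_scalar) /=.
  by have := D_iota x eps_scalar eps_scalar; rewrite /ev2 big_seq1 => <-.
have eps_inv : eps (iota x) * eps (iota x^-1) = 1 by rewrite -eps_mul -iotaM mulgV iota1.
have eps_neq0 : eps (iota x) != 0.
  by apply/eqP => eps0; move/eqP: eps_inv; rewrite eps0 mul0r eq_sym oner_eq0.
by apply: (mulfI eps_neq0); rewrite eps_sq mulr1.
Qed.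

Lemma antipode_iota x : S (iota x) = iota x^-1.
Proof.
have := teq2_sum (D_iota x) (antipode_mul_bilinear S_linear).
rewrite antipodeL eps_iota big_seq1 scale1r => S_iota_inv.
by rewrite -[S _]mulr1 -iota1 -(mulgV x) iotaM mulrA -S_iota_inv mul1r.
Qed.

Lemma iota_idem y x : iota y * e x = j y x *: e x.
Proof.
rewrite /idem -scalerAr mulr_sumr scalerA mulrC -scalerA; congr (_ *: _).
rewrite scaler_sumr [RHS](reindex_inj (mulgI y)) /=; apply: eq_bigr => z _.
by rewrite -scalerAr -iotaM scalerA (char_isoM hj) invfM mulrA mulfV ?mul1r ?(char_neq0 hj).
Qed.

Lemma idem_mul x' x : e x' * e x = if x' == x then e x else 0.
Proof.
rewrite {1}/idem -scalerAl mulr_suml.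
under eq_bigr do rewrite -scalerAl iota_idem scalerA.
rewrite -scaler_suml scalerA (char_col_orth hj).
by case: eqP => _; rewrite ?mulr0 ?scale0r // mulVf ?scale1r ?order_neq0.
Qed.

Lemma idem_central x h : e x * h = h * e x.
Proof.
rewrite /idem -scalerAl -scalerAr mulr_suml mulr_sumr; congr (_ *: _).
by apply: eq_bigr => y _; rewrite -scalerAl -scalerAr iota_central.
Qed.

Lemma sum_idem : \sum_x e x = 1.
Proof.
rewrite /idem -scaler_sumr exchange_big /=.
under eq_bigr do rewrite -scaler_suml.
under eq_bigr do under eq_bigr do rewrite -(char_isoV hj).
under eq_bigr do rewrite (sum_char hj) invg_eq1 (fun_if (fun c => c *: _)) scale0r.
by rewrite sum_pred1 scalerA mulVf ?scale1r ?iota1 ?order_neq0.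
Qed.

Lemma eps_idem x : eps (e x) = (x == 1%g)%:R.
Proof.
rewrite /idem (linZ eps_scalar) (lin_sum eps_scalar) /=.
under eq_bigr => y _ do rewrite (linZ eps_scalar) /= eps_iota -(char1 hj y).
by rewrite (char_col_orth hj); case: eqP => _; rewrite ?mulr0 // mulVf ?order_neq0.
Qed.

Lemma antipode_idem x : S (e x) = e x^-1.
Proof.
rewrite /idem (linZ S_linear) (lin_sum S_linear) /=; congr (_ *: _).
rewrite [LHS](reindex_inj invg_inj) /=; apply: eq_bigr => y _.
by rewrite (linZ S_linear) /= antipode_iota invgK (char_isoV hj) (charV hj).
Qed.

Lemma iota_expand y : iota y = \sum_x j y x *: e x.
Proof.
rewrite /idem; under eq_bigr do rewrite scalerA mulrC -scalerA scaler_sumr.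
rewrite -scaler_sumr exchange_big /=.
under eq_bigr do under eq_bigr do rewrite scalerA.
under eq_bigr do rewrite -scaler_suml (char_row_orth hj) eq_sym.
under eq_bigr do rewrite (fun_if (fun c => c *: _)) scale0r.
by rewrite sum_pred1 scalerA mulVf ?scale1r ?order_neq0.
Qed.

Lemma ev2_D_idem f g x : lin_fun f -> lin_fun g ->
  ev2 f g (D (e x)) = \sum_a f (e a) * g (e (a^-1 * x)%g).
Proof.
move=> lin_f lin_g; have lin_D := ev2_D_scalar D_linear lin_f lin_g.
have iota_coord (k : H -> C) y : lin_fun k -> k (iota y) = \sum_a j y a * k (e a).
  move=> lin_k; rewrite iota_expand (lin_sum lin_k).
  by apply: eq_bigr => a _; rewrite (linZ lin_k).
rewrite /idem (linZ lin_D) (lin_sum lin_D) /=.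
under eq_bigr do rewrite (linZ lin_D) /= (D_iota _ lin_f lin_g) /ev2 big_seq1 /=.
transitivity (\sum_y \sum_a \sum_b
   n^-1 * (j y x)^-1 * j y a * j y b * (f (e a) * g (e b))).
  rewrite mulr_sumr; apply: eq_bigr => y _.
  rewrite (iota_coord f) // (iota_coord g) // mulr_suml !mulr_sumr; apply: eq_bigr => a _.
  by rewrite !mulr_sumr; apply: eq_bigr => b _; ring.
rewrite exchange_big; apply: eq_bigr => a _; rewrite exchange_big.
transitivity (\sum_b n^-1 * (\sum_y (j y x)^-1 * j y (a * b)%g) * (f (e a) * g (e b))).
  apply: eq_bigr => b _; rewrite mulr_sumr mulr_suml.
  by apply: eq_bigr => y _; rewrite (charM hj); ring.
rewrite (bigD1 (a^-1 * x)%g) //= (char_col_orth hj) mulKVg eqxx.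
rewrite mulVf ?order_neq0 // mul1r big1 ?addr0 // => b b_neq.
rewrite (char_col_orth hj) -[X in X == _](mulKVg a) (inj_eq (mulgI a)) eq_sym.
by rewrite (negbTE b_neq) mulr0 mul0r.
Qed.
End CentralIdempotents.

Section NormalizedCocycle.
Variables (gT : finGroupType) (w : gT -> gT -> gT -> C).
Hypothesis hw : normalized_3cocycle w.

Lemma cocycle_neq0 x y z : w x y z != 0. Proof. by case: hw. Qed.

Lemma cocycleP x y z t :
  w y z t * w x (y * z)%g t * w x y z = w (x * y)%g z t * w x y (z * t)%g.
Proof. by case: hw. Qed.

Lemma cocycle1l x y : w 1%g x y = 1. Proof. by case: hw => _ _ /(_ x y) []. Qed.
Lemma cocycle1m x y : w x 1%g y = 1. Proof. by case: hw => _ _ /(_ x y) []. Qed.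
Lemma cocycle1r x y : w x y 1%g = 1. Proof. by case: hw => _ _ /(_ x y) []. Qed.

Lemma cocycleVV x : w x^-1%g x x^-1%g * w x x^-1%g x = 1.
Proof.
have := cocycleP x x^-1%g x x^-1%g.
by rewrite !mulgV !mulVg cocycle1m cocycle1l cocycle1r mulr1 mul1r => ->.
Qed.

End NormalizedCocycle.

(* Dividing by [rho 1 1] does not change the coboundary, and the normalization
   of [w] and [w'] then forces [rho 1 y = rho x 1 = rho 1 1]. *)
Lemma normalized_coboundary (gT : finGroupType) (w w' : gT -> gT -> gT -> C) :
  normalized_3cocycle w -> normalized_3cocycle w' -> cohomologous w w' ->
  exists r : gT -> gT -> C, [/\ forall x y, r x y != 0,
    forall y, r 1%g y = 1, forall x, r x 1%g = 1 &
    forall x y z, w' x y z = w x y z * (r y z * r x (y * z)%g) / (r (x * y)%g z * r x y)].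
Proof.
move=> hw hw' [rho [rho_neq0 coh]].
have rho1l y : rho 1%g y = rho 1%g 1%g.
  have := coh 1%g 1%g y; rewrite (cocycle1l hw) (cocycle1l hw') !mul1g mul1r.
  by rewrite invfM mulrACA divff // mul1r => /esym/divr1_eq.
have rho1r x : rho x 1%g = rho 1%g 1%g.
  have := coh x 1%g 1%g; rewrite (cocycle1r hw) (cocycle1r hw') !mulg1 mul1r.
  by rewrite invfM mulrACA divff // mulr1 => /esym/divr1_eq.
exists (fun x y => rho x y / rho 1%g 1%g); split=> [x y|y|x|x y z].
- by rewrite mulf_neq0 ?invr_neq0.
- by rewrite rho1l divff.
- by rewrite rho1r divff.
- by rewrite coh; field; rewrite !rho_neq0.
Qed.

Section TensorCubeAlgebra.
Variable H : algType C.
Implicit Types s t u : T3 H.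

Lemma lin_fun_mull (f : H -> C) a : lin_fun f -> lin_fun (fun h => f (a * h)).
Proof. by move=> lin_f b u v /=; rewrite mulrDr -scalerAr lin_f. Qed.

Lemma lin_fun_mulr (f : H -> C) a : lin_fun f -> lin_fun (fun h => f (h * a)).
Proof. by move=> lin_f b u v /=; rewrite mulrDl -scalerAl lin_f. Qed.


Lemma teq3_trans t s u : teq3 s t -> teq3 t u -> teq3 s u.
Proof. by move=> st tu f g k lin_f lin_g lin_k; rewrite st ?tu. Qed.

Lemma teq3_sym s t : teq3 s t -> teq3 t s.
Proof. by move=> st f g k lin_f lin_g lin_k; rewrite st. Qed.

Lemma mul3_teql s s' t : teq3 s s' -> teq3 (mul3 s t) (mul3 s' t).
Proof.
move=> ss' f g k lin_f lin_g lin_k; rewrite /ev3 /mul3 !big_allpairs_dep.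
rewrite exchange_big [RHS]exchange_big; apply: eq_bigr => q _.
exact: (ss' _ _ _ (lin_fun_mulr q.1.1 lin_f) (lin_fun_mulr q.1.2 lin_g)
  (lin_fun_mulr q.2 lin_k)).
Qed.

Lemma mul3_teqr s t t' : teq3 t t' -> teq3 (mul3 s t) (mul3 s t').
Proof.
move=> tt' f g k lin_f lin_g lin_k; rewrite /ev3 /mul3 !big_allpairs_dep.
apply: eq_bigr => p _.
exact: (tt' _ _ _ (lin_fun_mull p.1.1 lin_f) (lin_fun_mull p.1.2 lin_g)
  (lin_fun_mull p.2 lin_k)).
Qed.

Lemma mul3A s t u : teq3 (mul3 s (mul3 t u)) (mul3 (mul3 s t) u).
Proof.
move=> f g k _ _ _; rewrite /ev3 /mul3 !big_allpairs_dep; apply: eq_bigr => p _.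
rewrite big_allpairs_dep; apply: eq_bigr => q _; apply: eq_bigr => r _ /=.
by rewrite !mulrA.
Qed.

Lemma mul3_oner s : teq3 (mul3 s (one3 H)) s.
Proof.
move=> f g k _ _ _; rewrite /ev3 /mul3 big_allpairs_dep; apply: eq_bigr => p _.
by rewrite big_seq1 !mulr1.
Qed.

Lemma mul3_onel s : teq3 (mul3 (one3 H) s) s.
Proof.
move=> f g k _ _ _; rewrite /ev3 /mul3 big_allpairs_dep big_seq1.
by under eq_bigr do rewrite !mul1r.
Qed.

Lemma inverse3_uniq s t t' : inverse3 s t -> inverse3 s t' -> teq3 t' t.
Proof.
move=> [st _] [_ t's].
apply: teq3_trans (teq3_sym (mul3_oner t')) _.
apply: teq3_trans (mul3_teqr t' (teq3_sym st)) _.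
apply: teq3_trans (mul3A _ _ _) _.
exact: teq3_trans (mul3_teql _ t's) (mul3_onel t).
Qed.
End TensorCubeAlgebra.

Section Coordinates.
Variables (H : algType C) (D : H -> T2 H) (eps : H -> C) (S : H -> H).
Hypothesis D_linear : forall a u v, teq2 (D (a *: u + v)) (scale2 a (D u) ++ D v).
Hypothesis eps_scalar : scalar eps.
Hypothesis eps_mul : forall u v, eps (u * v) = eps u * eps v.
Hypothesis eps_1 : eps 1 = 1.
Hypothesis counit : forall h, eps_id eps (D h) = h /\ id_eps eps (D h) = h.
Hypothesis D_mul : forall u v, teq2 (D (u * v)) (mul2 (D u) (D v)).
Hypothesis D_1 : teq2 (D 1) (one2 H).
Hypothesis coassoc : forall h, teq3 (D_id D (D h)) (id_D D (D h)).
Hypothesis S_linear : linear S.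
Hypothesis S_bij : bijective S.
Hypothesis antipodeL : forall h, \sum_(p <- D h) S p.1 * p.2 = (eps h)%:A.
Hypothesis antipodeR : forall h, \sum_(p <- D h) p.1 * S p.2 = (eps h)%:A.

Variables (gT : finGroupType) (iota : gT -> H) (j : gT -> gT -> C).
Hypothesis hG : central_grouplike_subgroup D iota.
Hypothesis hj : char_iso j.

Local Notation e := (idem iota j).

(* [has_coords2 s c]: s equals sum_(x, y) c x y e_x (x) e_y in the sense of
   [teq2]; similarly for three and four factors. *)
Definition has_coords2 (s : T2 H) (c : gT -> gT -> C) :=
  forall f g, lin_fun f -> lin_fun g ->
  ev2 f g s = \sum_x \sum_y c x y * (f (e x) * g (e y)).
Definition has_coords3 (s : T3 H) (c : gT -> gT -> gT -> C) :=
  forall f g k, lin_fun f -> lin_fun g -> lin_fun k ->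
  ev3 f g k s = \sum_x \sum_y \sum_z c x y z * (f (e x) * g (e y) * k (e z)).
Definition has_coords4 (s : T4 H) (c : gT -> gT -> gT -> gT -> C) :=
  forall f g k l, lin_fun f -> lin_fun g -> lin_fun k -> lin_fun l ->
  ev4 f g k l s = \sum_x \sum_y \sum_z \sum_t
     c x y z t * (f (e x) * g (e y) * k (e z) * l (e t)).

Definition etensor2 (c : gT -> gT -> C) : T2 H :=
  flatten [seq [seq (c x y *: e x, e y) | y <- enum gT] | x <- enum gT].
Definition etensor3 (c : gT -> gT -> gT -> C) : T3 H :=
  flatten [seq [seq (c x y z *: e x, e y, e z) | y <- enum gT, z <- enum gT]
          | x <- enum gT].

Lemma big_etensor2 (V : nmodType) (F : H * H -> V) c :
  \sum_(p <- etensor2 c) F p = \sum_x \sum_y F (c x y *: e x, e y).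
Proof.
rewrite big_flatten /= big_map big_enum; apply: eq_bigr => x _.
by rewrite big_map big_enum.
Qed.

Lemma big_etensor3 (V : nmodType) (F : H * H * H -> V) c :
  \sum_(p <- etensor3 c) F p = \sum_x \sum_y \sum_z F (c x y z *: e x, e y, e z).
Proof.
rewrite big_flatten /= big_map big_enum; apply: eq_bigr => x _.
by rewrite big_allpairs_dep big_enum; apply: eq_bigr => y _; rewrite big_enum.
Qed.

Lemma etensor2_coords c : has_coords2 (etensor2 c) c.
Proof.
move=> f g lin_f lin_g; rewrite /ev2 big_etensor2.
by do 2![apply: eq_bigr => ? _]; rewrite (linZ lin_f) mulrA.
Qed.

Lemma etensor3_coords c : has_coords3 (etensor3 c) c.
Proof.
move=> f g k lin_f lin_g lin_k; rewrite /ev3 big_etensor3.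
by do 3![apply: eq_bigr => ? _]; rewrite (linZ lin_f) !mulrA.
Qed.

Lemma lin_fun_1 (f : H -> C) : lin_fun f -> f 1 = \sum_x f (e x).
Proof. by move=> lin_f; rewrite -(sum_idem hG hj) (lin_sum lin_f). Qed.

Lemma lin_fun_idem_mul_neq (f : H -> C) x y : lin_fun f -> x != y -> f (e x * e y) = 0.
Proof. by move=> lin_f /negbTE xy; rewrite (idem_mul hG hj) xy (lin0 lin_f). Qed.

Lemma one2_coords : has_coords2 (one2 H) (fun _ _ => 1).
Proof.
move=> f g lin_f lin_g; rewrite /ev2 big_seq1 (lin_fun_1 lin_f) (lin_fun_1 lin_g).
rewrite mulr_suml; apply: eq_bigr => x _; rewrite mulr_sumr.
by apply: eq_bigr => y _; rewrite mul1r.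
Qed.

Lemma one3_coords : has_coords3 (one3 H) (fun _ _ _ => 1).
Proof.
move=> f g k lin_f lin_g lin_k; rewrite /ev3 big_seq1 /=.
rewrite (lin_fun_1 lin_f) (lin_fun_1 lin_g) (lin_fun_1 lin_k).
rewrite -mulrA mulr_suml; apply: eq_bigr => x _; rewrite mulr_suml mulr_sumr.
apply: eq_bigr => y _; rewrite !mulr_sumr; apply: eq_bigr => z _.
by rewrite mul1r !mulrA.
Qed.

Lemma mul2_coords s t c d : has_coords2 s c -> has_coords2 t d ->
  has_coords2 (mul2 s t) (fun x y => c x y * d x y).
Proof.
move=> s_c t_d f g lin_f lin_g; rewrite /ev2 /mul2 big_allpairs_dep /=.
transitivity (\sum_(p <- s) \sum_x' \sum_y' d x' y' * (f (p.1 * e x') * g (p.2 * e y'))).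
  by apply: eq_bigr => p _; exact: (t_d _ _ (lin_fun_mull p.1 lin_f) (lin_fun_mull p.2 lin_g)).
rewrite exchange_big; apply: eq_bigr => x' _; rewrite exchange_big; apply: eq_bigr => y' _.
rewrite -mulr_sumr -[\sum_(p <- s) _]/(ev2 (f \o *%R^~ (e x')) (g \o *%R^~ (e y')) s).
rewrite (s_c _ _ (lin_fun_mulr (e x') lin_f) (lin_fun_mulr (e y') lin_g)) /=.
rewrite (big_only1 x') // => [|x x_neq _]; last first.
  by apply: big1 => y _; rewrite (lin_fun_idem_mul_neq lin_f x_neq) mul0r mulr0.
rewrite (big_only1 y') // => [|y y_neq _]; last first.
  by rewrite (lin_fun_idem_mul_neq lin_g y_neq) !mulr0.
by rewrite !(idem_mul hG hj) !eqxx mulrA [d x' y' * _]mulrC.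
Qed.

Lemma mul3_coords s t c d : has_coords3 s c -> has_coords3 t d ->
  has_coords3 (mul3 s t) (fun x y z => c x y z * d x y z).
Proof.
move=> s_c t_d f g k lin_f lin_g lin_k; rewrite /ev3 /mul3 big_allpairs_dep /=.
transitivity (\sum_(p <- s) \sum_x' \sum_y' \sum_z' d x' y' z' *
   (f (p.1.1 * e x') * g (p.1.2 * e y') * k (p.2 * e z'))).
  apply: eq_bigr => p _; apply: (t_d _ _ _ (lin_fun_mull p.1.1 lin_f)
    (lin_fun_mull p.1.2 lin_g) (lin_fun_mull p.2 lin_k)).
rewrite exchange_big; apply: eq_bigr => x' _; rewrite exchange_big; apply: eq_bigr => y' _.
rewrite exchange_big; apply: eq_bigr => z' _.
rewrite -mulr_sumr -[\sum_(p <- s) _]/(ev3 (f \o *%R^~ (e x')) (g \o *%R^~ (e y'))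
  (k \o *%R^~ (e z')) s).
rewrite (s_c _ _ _ (lin_fun_mulr (e x') lin_f) (lin_fun_mulr (e y') lin_g)
  (lin_fun_mulr (e z') lin_k)) /=.
rewrite (big_only1 x') // => [|x x_neq _]; last first.
  by do 2![apply: big1 => ? _]; rewrite (lin_fun_idem_mul_neq lin_f x_neq) !mul0r mulr0.
rewrite (big_only1 y') // => [|y y_neq _]; last first.
  by apply: big1 => z _; rewrite (lin_fun_idem_mul_neq lin_g y_neq) mulr0 !mul0r mulr0.
rewrite (big_only1 z') // => [|z z_neq _]; last first.
  by rewrite (lin_fun_idem_mul_neq lin_k z_neq) !mulr0.
by rewrite !(idem_mul hG hj) !eqxx mulrA [d x' y' z' * _]mulrC.
Qed.

Lemma mul4_coords s t c d : has_coords4 s c -> has_coords4 t d ->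
  has_coords4 (mul4 s t) (fun x y z u => c x y z u * d x y z u).
Proof.
move=> s_c t_d f g k l lin_f lin_g lin_k lin_l; rewrite /ev4 /mul4 big_allpairs_dep /=.
transitivity (\sum_(p <- s) \sum_x' \sum_y' \sum_z' \sum_u' d x' y' z' u' *
   (f (p.1.1.1 * e x') * g (p.1.1.2 * e y') * k (p.1.2 * e z') * l (p.2 * e u'))).
  apply: eq_bigr => p _; apply: (t_d _ _ _ _ (lin_fun_mull p.1.1.1 lin_f)
    (lin_fun_mull p.1.1.2 lin_g) (lin_fun_mull p.1.2 lin_k) (lin_fun_mull p.2 lin_l)).
rewrite exchange_big; apply: eq_bigr => x' _; rewrite exchange_big; apply: eq_bigr => y' _.
rewrite exchange_big; apply: eq_bigr => z' _; rewrite exchange_big; apply: eq_bigr => u' _.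
rewrite -mulr_sumr -[\sum_(p <- s) _]/(ev4 (f \o *%R^~ (e x')) (g \o *%R^~ (e y'))
  (k \o *%R^~ (e z')) (l \o *%R^~ (e u')) s).
rewrite (s_c _ _ _ _ (lin_fun_mulr (e x') lin_f) (lin_fun_mulr (e y') lin_g)
  (lin_fun_mulr (e z') lin_k) (lin_fun_mulr (e u') lin_l)) /=.
rewrite (big_only1 x') // => [|x x_neq _]; last first.
  by do 3![apply: big1 => ? _]; rewrite (lin_fun_idem_mul_neq lin_f x_neq) !mul0r mulr0.
rewrite (big_only1 y') // => [|y y_neq _]; last first.
  by do 2![apply: big1 => ? _]; rewrite (lin_fun_idem_mul_neq lin_g y_neq) mulr0 !mul0r mulr0.
rewrite (big_only1 z') // => [|z z_neq _]; last first.
  by apply: big1 => u _; rewrite (lin_fun_idem_mul_neq lin_k z_neq) mulr0 !mul0r mulr0.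
rewrite (big_only1 u') // => [|u u_neq _]; last first.
  by rewrite (lin_fun_idem_mul_neq lin_l u_neq) !mulr0.
by rewrite !(idem_mul hG hj) !eqxx mulrA [d x' y' z' u' * _]mulrC.
Qed.

Lemma D_id_coords s c : has_coords2 s c ->
  has_coords3 (D_id D s) (fun x y z => c (x * y)%g z).
Proof.
move=> s_c f g k lin_f lin_g lin_k.
transitivity (ev2 (fun u => ev2 f g (D u)) k s).
  by rewrite /ev3 /D_id big_allpairs_dep; apply: eq_bigr => p _; rewrite mulr_suml.
rewrite (s_c _ _ (ev2_D_scalar D_linear lin_f lin_g) lin_k) /=.
under eq_bigr do under eq_bigr do
  rewrite (ev2_D_idem D_linear hG hj _ lin_f lin_g) !mulr_suml mulr_sumr.
under eq_bigr do rewrite exchange_big; rewrite exchange_big.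
apply: eq_bigr => a _; rewrite [RHS](reindex_inj (mulgI a^-1%g)).
by do 2![apply: eq_bigr => ? _]; rewrite /= mulKVg; ring.
Qed.

Lemma id_D_coords s c : has_coords2 s c ->
  has_coords3 (id_D D s) (fun x y z => c x (y * z)%g).
Proof.
move=> s_c f g k lin_f lin_g lin_k.
transitivity (ev2 f (fun u => ev2 g k (D u)) s).
  rewrite /ev3 /id_D big_allpairs_dep; apply: eq_bigr => p _.
  by rewrite mulr_sumr; apply: eq_bigr => q _; rewrite mulrA.
rewrite (s_c _ _ lin_f (ev2_D_scalar D_linear lin_g lin_k)) /=; apply: eq_bigr => x _.
under eq_bigr do rewrite (ev2_D_idem D_linear hG hj _ lin_g lin_k) !mulr_sumr.
rewrite exchange_big; apply: eq_bigr => a _; rewrite [RHS](reindex_inj (mulgI a^-1%g)).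
by apply: eq_bigr => ? _; rewrite /= mulKVg; ring.
Qed.

Lemma D_id_id_coords s c : has_coords3 s c ->
  has_coords4 (D_id_id D s) (fun x y z t => c (x * y)%g z t).
Proof.
move=> s_c f g k l lin_f lin_g lin_k lin_l.
transitivity (ev3 (fun u => ev2 f g (D u)) k l s).
  by rewrite /ev4 /D_id_id big_allpairs_dep; apply: eq_bigr => p _; rewrite !mulr_suml.
rewrite (s_c _ _ _ (ev2_D_scalar D_linear lin_f lin_g) lin_k lin_l) /=.
under eq_bigr do under eq_bigr do under eq_bigr do
  rewrite (ev2_D_idem D_linear hG hj _ lin_f lin_g) !mulr_suml mulr_sumr.
under eq_bigr do under eq_bigr do rewrite exchange_big.
under eq_bigr do rewrite exchange_big; rewrite exchange_big.
apply: eq_bigr => a _; rewrite [RHS](reindex_inj (mulgI a^-1%g)).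
by do 3![apply: eq_bigr => ? _]; rewrite /= mulKVg; ring.
Qed.

Lemma id_D_id_coords s c : has_coords3 s c ->
  has_coords4 (id_D_id D s) (fun x y z t => c x (y * z)%g t).
Proof.
move=> s_c f g k l lin_f lin_g lin_k lin_l.
transitivity (ev3 f (fun u => ev2 g k (D u)) l s).
  rewrite /ev4 /id_D_id big_allpairs_dep; apply: eq_bigr => p _.
  by rewrite mulr_sumr mulr_suml; apply: eq_bigr => q _; rewrite !mulrA.
rewrite (s_c _ _ _ lin_f (ev2_D_scalar D_linear lin_g lin_k) lin_l) /=.
apply: eq_bigr => x _.
under eq_bigr do under eq_bigr do
  rewrite (ev2_D_idem D_linear hG hj _ lin_g lin_k) mulr_sumr !mulr_suml mulr_sumr.
under eq_bigr do rewrite exchange_big; rewrite exchange_big.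
apply: eq_bigr => a _; rewrite [RHS](reindex_inj (mulgI a^-1%g)).
by do 2![apply: eq_bigr => ? _]; rewrite /= mulKVg; ring.
Qed.

Lemma id_id_D_coords s c : has_coords3 s c ->
  has_coords4 (id_id_D D s) (fun x y z t => c x y (z * t)%g).
Proof.
move=> s_c f g k l lin_f lin_g lin_k lin_l.
transitivity (ev3 f g (fun u => ev2 k l (D u)) s).
  rewrite /ev4 /id_id_D big_allpairs_dep; apply: eq_bigr => p _.
  by rewrite mulr_sumr; apply: eq_bigr => q _; rewrite !mulrA.
rewrite (s_c _ _ _ lin_f lin_g (ev2_D_scalar D_linear lin_k lin_l)) /=.
apply: eq_bigr => x _; apply: eq_bigr => y _.
under eq_bigr do rewrite (ev2_D_idem D_linear hG hj _ lin_k lin_l) !mulr_sumr.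
rewrite exchange_big; apply: eq_bigr => a _; rewrite [RHS](reindex_inj (mulgI a^-1%g)).
by apply: eq_bigr => ? _; rewrite /= mulKVg; ring.
Qed.

Lemma one_t2_coords s c : has_coords2 s c -> has_coords3 (one_t2 s) (fun x y z => c y z).
Proof.
move=> s_c f g k lin_f lin_g lin_k; transitivity (f 1 * ev2 g k s).
  by rewrite /ev3 /one_t2 big_map mulr_sumr; apply: eq_bigr => p _; rewrite mulrA.
rewrite (s_c _ _ lin_g lin_k) (lin_fun_1 lin_f) mulr_suml; apply: eq_bigr => x _.
by rewrite mulr_sumr; apply: eq_bigr => y _; rewrite mulr_sumr; apply: eq_bigr => z _; ring.
Qed.

Lemma t2_one_coords s c : has_coords2 s c -> has_coords3 (t2_one s) (fun x y z => c x y).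
Proof.
move=> s_c f g k lin_f lin_g lin_k; transitivity (ev2 f g s * k 1).
  by rewrite /ev3 /t2_one big_map /ev2 mulr_suml.
rewrite (s_c _ _ lin_f lin_g) (lin_fun_1 lin_k) mulr_suml; apply: eq_bigr => x _.
by rewrite mulr_suml; apply: eq_bigr => y _; rewrite mulr_sumr; apply: eq_bigr => z _; ring.
Qed.

Lemma one_t3_coords s c : has_coords3 s c ->
  has_coords4 (one_t3 s) (fun x y z t => c y z t).
Proof.
move=> s_c f g k l lin_f lin_g lin_k lin_l; transitivity (f 1 * ev3 g k l s).
  by rewrite /ev4 /one_t3 big_map mulr_sumr; apply: eq_bigr => p _; rewrite !mulrA.
rewrite (s_c _ _ _ lin_g lin_k lin_l) (lin_fun_1 lin_f) mulr_suml; apply: eq_bigr => x _.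
rewrite mulr_sumr; apply: eq_bigr => y _; rewrite mulr_sumr; apply: eq_bigr => z _.
by rewrite mulr_sumr; apply: eq_bigr => t _; ring.
Qed.

Lemma t3_one_coords s c : has_coords3 s c ->
  has_coords4 (t3_one s) (fun x y z t => c x y z).
Proof.
move=> s_c f g k l lin_f lin_g lin_k lin_l; transitivity (ev3 f g k s * l 1).
  by rewrite /ev4 /t3_one big_map /ev3 mulr_suml.
rewrite (s_c _ _ _ lin_f lin_g lin_k) (lin_fun_1 lin_l) mulr_suml; apply: eq_bigr => x _.
rewrite mulr_suml; apply: eq_bigr => y _; rewrite mulr_suml; apply: eq_bigr => z _.
by rewrite mulr_sumr; apply: eq_bigr => t _; ring.
Qed.

Lemma id_eps_id_coords s c : has_coords3 s c ->
  has_coords2 (id_eps_id eps s) (fun x z => c x 1%g z).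
Proof.
move=> s_c f g lin_f lin_g; have eps_e := eps_idem eps_scalar eps_mul eps_1 counit hG hj.
transitivity (ev3 f eps g s).
  rewrite /ev2 /id_eps_id big_map; apply: eq_bigr => p _.
  by rewrite /= (linZ lin_f) /=; ring.
rewrite (s_c _ _ _ lin_f eps_scalar lin_g); apply: eq_bigr => x _.
rewrite (big_only1 1%g) // => [|y y_neq _]; last first.
  by apply: big1 => z _; rewrite eps_e (negbTE y_neq) mulr0 mul0r mulr0.
by apply: eq_bigr => z _; rewrite eps_e eqxx mulr1.
Qed.

Lemma coords2_teq s t c c' : has_coords2 s c -> has_coords2 t c' ->
  (forall x y, c x y = c' x y) -> teq2 s t.
Proof.
move=> s_c t_c' cc' f g lin_f lin_g; rewrite s_c ?t_c' //.
by do 2![apply: eq_bigr => ? _]; rewrite cc'.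
Qed.

Lemma coords3_teq s t c c' : has_coords3 s c -> has_coords3 t c' ->
  (forall x y z, c x y z = c' x y z) -> teq3 s t.
Proof.
move=> s_c t_c' cc' f g k lin_f lin_g lin_k; rewrite s_c ?t_c' //.
by do 3![apply: eq_bigr => ? _]; rewrite cc'.
Qed.

Lemma coords4_teq s t c c' : has_coords4 s c -> has_coords4 t c' ->
  (forall x y z u, c x y z u = c' x y z u) -> teq4 s t.
Proof.
move=> s_c t_c' cc' f g k l lin_f lin_g lin_k lin_l; rewrite s_c ?t_c' //.
by do 4![apply: eq_bigr => ? _]; rewrite cc'.
Qed.

Lemma scaled_idem_central a x h : (a *: e x) * h = h * (a *: e x).
Proof. by rewrite -scalerAl (idem_central _ hG) scalerAr. Qed.

Lemma combination_central (a : gT -> C) h :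
  (\sum_u a u *: e u) * h = h * (\sum_u a u *: e u).
Proof.
by rewrite mulr_suml mulr_sumr; apply: eq_bigr => u _; rewrite scaled_idem_central.
Qed.

Lemma etensor3_central c t : teq3 (mul3 (etensor3 c) t) (mul3 t (etensor3 c)).
Proof.
move=> f g k _ _ _; rewrite /ev3 /mul3 !big_allpairs_dep exchange_big.
apply: eq_bigr => q _; rewrite !big_etensor3; do 3![apply: eq_bigr => ? _].
by rewrite /= scaled_idem_central !(idem_central _ hG).
Qed.

Lemma scaled_idem_mul a x y : (a *: e x) * e y = (a * (x == y)%:R) *: e x.
Proof.
rewrite -scalerAl (idem_mul hG hj).
by case: eqP => [->|_]; rewrite ?mulr1 ?mulr0 ?scaler0 ?scale0r.
Qed.

Lemma scaled_idem_mul_combination a (b : gT -> C) x :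
  (a *: e x) * (\sum_u b u *: e u) = (a * b x) *: e x.
Proof.
rewrite -scalerAl mulr_sumr (big_only1 x) // => [|u u_neq _].
  by rewrite -scalerAr (idem_mul hG hj) eqxx scalerA.
by rewrite -scalerAr (idem_mul hG hj) eq_sym (negbTE u_neq) scaler0.
Qed.

Section QuasiHopf.
Variable w : gT -> gT -> gT -> C.
Hypothesis hw : normalized_3cocycle w.

Local Notation phi := (etensor3 (fun x y z => (w x y z)^-1)).
Local Notation psi := (etensor3 w).
Local Notation beta := (\sum_x w x x^-1%g x *: e x).

Lemma phi_psi_inverse : inverse3 phi psi.
Proof.
split; apply: (coords3_teq (mul3_coords (etensor3_coords _) (etensor3_coords _)) one3_coords)
  => x y z /=; by rewrite ?mulVf ?mulfV ?(cocycle_neq0 hw).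
Qed.

Lemma phi_pentagon :
  teq4 (mul4 (mul4 (one_t3 phi) (id_D_id D phi)) (t3_one phi))
       (mul4 (id_id_D D phi) (D_id_id D phi)).
Proof.
apply: (coords4_teq (mul4_coords (mul4_coords (one_t3_coords (etensor3_coords _))
    (id_D_id_coords (etensor3_coords _))) (t3_one_coords (etensor3_coords _)))
  (mul4_coords (id_id_D_coords (etensor3_coords _)) (D_id_id_coords (etensor3_coords _))))
  => x y z t /=.
by rewrite -!invfM (cocycleP hw) mulrC.
Qed.

Lemma phi_counit : teq2 (id_eps_id eps phi) (one2 H).
Proof.
apply: (coords2_teq (id_eps_id_coords (etensor3_coords _)) one2_coords) => x z /=.
by rewrite (cocycle1m hw) invr1.
Qed.

Lemma phi_quasi_coassoc h : teq3 (mul3 phi (D_id D (D h))) (mul3 (id_D D (D h)) phi).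
Proof. exact: teq3_trans (mul3_teqr _ (coassoc h)) (etensor3_central _ _). Qed.

Lemma phi_beta_antipode : \sum_(p <- phi) p.1.1 * beta * S p.1.2 * 1 * p.2 = 1.
Proof.
rewrite big_etensor3 -[RHS](sum_idem hG hj); apply: eq_bigr => x _.
under eq_bigr do under eq_bigr do rewrite /= mulr1
  (antipode_idem eps_scalar eps_mul eps_1 counit S_linear antipodeL hG hj)
  scaled_idem_mul_combination !scaled_idem_mul.
rewrite (big_only1 x^-1%g) // => [|y y_neq _]; last first.
  by apply: big1 => z _; rewrite eq_sym eq_invg_sym (negbTE y_neq) mulr0 mul0r scale0r.
rewrite (big_only1 x) // => [|z z_neq _]; last first.
  by rewrite (eq_sym x z) (negbTE z_neq) mulr0 scale0r.
by rewrite invgK !eqxx !mulr1 mulVf ?scale1r ?(cocycle_neq0 hw).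
Qed.

Lemma inverse_antipode_beta p : inverse3 phi p ->
  \sum_(q <- p) S q.1.1 * 1 * q.1.2 * beta * S q.2 = 1.
Proof.
move=> phi_p.
have lin_T : trilinear (fun a b c : H => S a * 1 * b * beta * S c).
  by split=> [b c|a c|a b] s u v; linear_norm S_linear.
rewrite (teq3_sum (inverse3_uniq phi_psi_inverse phi_p) lin_T) big_etensor3.
rewrite -[RHS](sum_idem hG hj) [RHS](reindex_inj invg_inj); apply: eq_bigr => x _.
under eq_bigr do under eq_bigr do rewrite /= mulr1 (linZ S_linear) /=
  !(antipode_idem eps_scalar eps_mul eps_1 counit S_linear antipodeL hG hj)
  scaled_idem_mul scaled_idem_mul_combination scaled_idem_mul.
rewrite (big_only1 x^-1%g) // => [|y y_neq _]; last first.
  by apply: big1 => z _; rewrite eq_sym (negbTE y_neq) mulr0 !mul0r scale0r.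
rewrite (big_only1 x) // => [|z z_neq _]; last first.
  by rewrite !(inj_eq invg_inj) (eq_sym x z) (negbTE z_neq) mulr0 scale0r.
by rewrite !eqxx !mulr1 invgK mulrC (cocycleVV hw) scale1r.
Qed.

Lemma quasi_hopf_of_cocycle : quasi_hopf D eps (qphi iota j w) 1 (qbeta iota j w) S.
Proof.
change (quasi_hopf D eps phi 1 beta S).
split; split=> //.
- split; first by split; split.
  split=> //; [by exists psi; apply: phi_psi_inverse|exact: phi_pentagon|exact: phi_counit
    |exact: phi_quasi_coassoc].
- split=> //; first exact: (antipode_mul D_mul eps_mul coassoc counit S_linear).
  exact: (antipode1 D_1 eps_1 S_linear antipodeL).
- by move=> h; under eq_bigr do rewrite mulr1; rewrite antipodeL.
- move=> h; transitivity (beta * \sum_(p <- D h) p.1 * S p.2).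
    by rewrite mulr_sumr; apply: eq_bigr => p _; rewrite -combination_central mulrA.
  by rewrite antipodeR mulr_algr.
- exact: phi_beta_antipode.
- exact: inverse_antipode_beta.
Qed.
End QuasiHopf.

Lemma etensor2_inverse r : (forall x y, r x y != 0) ->
  inverse2 (etensor2 r) (etensor2 (fun x y => (r x y)^-1)).
Proof.
move=> r_neq0; split;
  apply: (coords2_teq (mul2_coords (etensor2_coords _) (etensor2_coords _)) one2_coords)
  => x y /=; by rewrite ?mulfV ?mulVf.
Qed.

Lemma eps_id_etensor2 r : (forall y, r 1%g y = 1) -> eps_id eps (etensor2 r) = 1.
Proof.
move=> r1; have eps_e := eps_idem eps_scalar eps_mul eps_1 counit hG hj.
rewrite /eps_id big_etensor2 -[RHS](sum_idem hG hj) exchange_big.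
apply: eq_bigr => y _; rewrite (big_only1 1%g) // => [|x x_neq _].
  by rewrite /= (linZ eps_scalar) /= eps_e eqxx mulr1 r1 scale1r.
by rewrite /= (linZ eps_scalar) /= eps_e (negbTE x_neq) mulr0 scale0r.
Qed.

Lemma id_eps_etensor2 r : (forall x, r x 1%g = 1) -> id_eps eps (etensor2 r) = 1.
Proof.
move=> r1; have eps_e := eps_idem eps_scalar eps_mul eps_1 counit hG hj.
rewrite /id_eps big_etensor2 -[RHS](sum_idem hG hj).
apply: eq_bigr => x _; rewrite (big_only1 1%g) // => [|y y_neq _].
  by rewrite /= eps_e eqxx r1 !scale1r.
by rewrite /= eps_e (negbTE y_neq) scale0r.
Qed.

(* [(F X) G = X (F G)] because the components of [F = etensor2 a] are central. *)
Lemma etensor2_conjugate a b (X : T2 H) :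
  teq2 (mul2 (etensor2 a) (etensor2 b)) (one2 H) ->
  teq2 (mul2 (mul2 (etensor2 a) X) (etensor2 b)) X.
Proof.
move=> ab f g lin_f lin_g; rewrite /ev2 /mul2.
rewrite (big_allpairs_dep (r1 := [seq (p.1 * q.1, p.2 * q.2) | p <- etensor2 a, q <- X])
   (r2 := fun _ => etensor2 b)) (big_allpairs_dep (r1 := etensor2 a) (r2 := fun _ => X)).
rewrite exchange_big; apply: eq_bigr => q _.
have -> : f q.1 * g q.2 = ev2 (fun h => f (q.1 * h)) (fun h => g (q.2 * h))
    (mul2 (etensor2 a) (etensor2 b)).
  by rewrite (ab _ _ (lin_fun_mull q.1 lin_f) (lin_fun_mull q.2 lin_g)) /ev2 big_seq1 !mulr1.
rewrite /ev2 /mul2 (big_allpairs_dep (r1 := etensor2 a) (r2 := fun _ => etensor2 b)).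
rewrite !(big_etensor2 _ a); do 3![apply: eq_bigr => ? _].
by rewrite /= scaled_idem_central (idem_central _ hG) !mulrA.
Qed.

Lemma map3_id (s : T3 H) : map3 id s = s.
Proof. by rewrite /map3 -[RHS]map_id; apply: eq_map => -[[]]. Qed.

Lemma gauge_equivalent_of_cohomologous w w' :
  normalized_3cocycle w -> normalized_3cocycle w' -> cohomologous w w' ->
  gauge_equivalent D eps (qphi iota j w) D eps (qphi iota j w').
Proof.
move=> hw hw' coh; have [r [r_neq0 r1l r1r cob]] := normalized_coboundary hw hw' coh.
have F_inverse := etensor2_inverse r_neq0.
exists (etensor2 r), (etensor2 (fun x y => (r x y)^-1)), id; split.
  by split; [|apply: eps_id_etensor2|apply: id_eps_etensor2].
split; split=> //; first by exists id.
  move=> h f g lin_f lin_g; rewrite /twist_D (etensor2_conjugate (D h) F_inverse.1 lin_f lin_g).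
  by rewrite /ev2 /map2 big_map.
rewrite map3_id; apply: (coords3_teq (etensor3_coords _)
  (mul3_coords (mul3_coords (mul3_coords (mul3_coords
    (one_t2_coords (etensor2_coords r)) (id_D_coords (etensor2_coords r)))
    (etensor3_coords _)) (D_id_coords (etensor2_coords _)))
    (t2_one_coords (etensor2_coords _)))) => x y z /=.
by rewrite cob; field; rewrite !r_neq0 (cocycle_neq0 hw).
Qed.
End Coordinates.

Unset Implicit Arguments.

Theorem mainTheorem8 (H : algType C) (D : H -> T2 H) (eps : H -> C) (S : H -> H)
  (hH : hopf_algebra D eps S)
  (gT : finGroupType) (iota : gT -> H) (hG : central_grouplike_subgroup D iota)
  (w : gT -> gT -> gT -> C) (hw : normalized_3cocycle w)
  (j : gT -> gT -> C) (hj : char_iso j) :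
  quasi_hopf D eps (qphi iota j w) 1 (qbeta iota j w) S /\
  (forall w' : gT -> gT -> gT -> C, normalized_3cocycle w' -> cohomologous w w' ->
     gauge_equivalent D eps (qphi iota j w) D eps (qphi iota j w')).
Proof.
case: hH => [[[[D_linear D_mul D_1] [eps_scalar eps_mul eps_1]] coassoc counit]
  [S_linear antipodeL antipodeR S_bij]].
split; first by apply: quasi_hopf_of_cocycle.
by move=> w' hw' coh; apply: gauge_equivalent_of_cohomologous.
Qed.
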